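(* Let $R\subseteq\mathbb N$ be sparse, $d\in\mathbb N^+$, $\tilde R\subseteq^d R$, $n\in\mathbb N^+$, and $\mathbf A$ an $n$-tuple of operators on $R$, all $\neq_R0$. Then there is $\Delta_0$ such that for every $\Delta\in d\mathbb N$ with $\Delta\ge\Delta_0$: (i) for all $x\in\mathbb Z$, $x>\mathbf A\cdot P_\Delta(x;\mathbf A,\tilde R)$ iff $x>\inf\mathbf A\cdot\tilde R^n_\Delta$, and $x\le\mathbf A\cdot Q_\Delta(x;\mathbf A,\tilde R)$ iff $x\le\sup\mathbf A\cdot\tilde R^n_\Delta$; (ii) for all $x\in\mathbb Z$, $Q^1_\Delta(x;\mathbf A,\tilde R)=\sigma^{d\varepsilon}P^1_\Delta(x;\mathbf A,\tilde R)$ for some $\varepsilon\in\{-1,0,1\}$.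
   Context: Let $R\subseteq\mathbb N$ be infinite, enumerated increasingly as $(r_n)_{n\in\mathbb N}$; $\sigma:R\to R$ is the successor map $\sigma(r_n)=r_{n+1}$, $\sigma^k$ its $k$-fold iterate ($\sigma^0=\mathrm{id}$), $\sigma^{-1}$ the predecessor map with $\sigma^{-1}(\min R)=\min R$ and $\sigma^{-k}$ its iterate. An operator on $R$ is a function $R\to\mathbb Z$, $z\mapsto a_m\sigma^m(z)+\dots+a_0\sigma^0(z)$ with $a_i\in\mathbb Z$. For an operator $A$: $A=_R0$ if $Az=0$ for all $z\in R$; $A>_R0$ (resp. $A<_R0$) if $Az>0$ (resp. $Az<0$) for all but finitely many $z\in R$. $R$ is sparse if every operator $A$ satisfies (S1) $A=_R0$ or $A>_R0$ or $A<_R0$; and (S2) if $A>_R0$ then there is $\Delta\in\mathbb N$ with $A(\sigma^\Delta z)>z$ for all $z\in R$. $\tilde R\subseteq^dR$ means $\tilde R=\{r_{N+dt}:t\in\mathbb N\}$ for some $N\in\mathbb N$. For $\mathbf A$ an $n$-tuple of operators and $z\in R^n$, $\mathbf A\cdot z=\sum_iA_iz_i$; for $S\subseteq R^n$, $\mathbf A\cdot S=\{\mathbf A\cdot z:z\in S\}$. $\tilde R^n_\Delta=\{(z_1,\dots,z_n)\in\tilde R^n: z_i\ge\sigma^\Delta z_{i+1}\ (1\le i\le n)\}$ with $z_{n+1}:=\min\tilde R$. When $\Delta$ is large enough that $z\mapsto\mathbf A\cdot z$ is injective on $R^n_\Delta$: for nonempty $S\subseteq R^n_\Delta$ with $\mathbf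 A\cdot S$ bounded below (resp. above), $\min_{\mathbf A}S$ (resp. $\max_{\mathbf A}S$) is the unique $z\in S$ with $\mathbf A\cdot z=\min\mathbf A\cdot S$ (resp. $\max$). Then $P_\Delta(x;\mathbf A,\tilde R)=\max_{\mathbf A}\{z\in\tilde R^n_\Delta:\mathbf A\cdot z<x\}$ if $x>\inf\mathbf A\cdot\tilde R^n_\Delta$, and $=\min_{\mathbf A}\tilde R^n_\Delta$ otherwise; $Q_\Delta(x;\mathbf A,\tilde R)=\min_{\mathbf A}\{z\in\tilde R^n_\Delta:\mathbf A\cdot z\ge x\}$ if $x\le\sup\mathbf A\cdot\tilde R^n_\Delta$, and $=\max_{\mathbf A}\tilde R^n_\Delta$ otherwise. $P^i_\Delta,Q^i_\Delta$ denote the $i$-th coordinates. *)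

From mathcomp Require Import all_boot all_order all_algebra.
From Stdlib Require Import ClassicalEpsilon.
Import Order.TTheory GRing.Theory Num.Theory.
Local Open Scope ring_scope.

(* The infinite set R ⊆ N is given by its increasing enumeration r : nat -> nat
   (r k = r_k).  An element z = r_k of R is handled through its index k; the
   successor map is sigma (r_k) = r_(k+1), hence sigma^i (r_k) = r_(k+i). *)

(* sigma^e on indices for e : int; negative powers use the predecessor map,
   with sigma^-1 (min R) = min R (truncated subtraction). *)
Definition sigpow (e : int) (j : nat) : nat :=
  match e with Posz m => (j + m)%N | Negz m => (j - m.+1)%N end.

(* An operator a_m sigma^m + ... + a_0 sigma^0 is its coefficient list
   [:: a_0; ...; a_m]; applied to z = r_k it gives sum_i a_i r_(k+i). *)
Definition opApp (r : nat -> nat) (A : seq int) (k : nat) : int :=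
  \sum_(i < size A) A`_i * (r (k + i)%N)%:Z.

Definition op_zero (r : nat -> nat) (A : seq int) : Prop :=
  forall k, opApp r A k = 0.
Definition op_pos (r : nat -> nat) (A : seq int) : Prop :=
  exists N, forall k, (N <= k)%N -> 0 < opApp r A k.
Definition op_neg (r : nat -> nat) (A : seq int) : Prop :=
  exists N, forall k, (N <= k)%N -> opApp r A k < 0.

Definition sparse (r : nat -> nat) : Prop :=
  forall A : seq int,
    (op_zero r A \/ op_pos r A \/ op_neg r A) /\
    (op_pos r A -> exists D : nat, forall k, (r k)%:Z < opApp r A (k + D)%N).

(* An n-tuple z in R^n is represented by its index tuple k (z_i = r (k i)). *)
Definition dotA (r : nat -> nat) (n : nat) (As : 'I_n -> seq int)
  (k : {ffun 'I_n -> nat}) : int :=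
  \sum_(i < n) opApp r (As i) (k i).

(* index of z_(j+1) (0-based j), with z_(n+1) := min Rtilde = r_N *)
Definition ext (n N : nat) (k : {ffun 'I_n -> nat}) (j : nat) : nat :=
  oapp k N (insub j : option 'I_n).

(* Rtilde = { r_(N + d t) : t in N } (Rtilde ⊆^d R).
   inTup r N d n D k  <->  (r (k i))_i ∈ Rtilde^n_D, i.e. every z_i ∈ Rtilde and
   z_i >= sigma^D z_(i+1) for 1 <= i <= n with z_(n+1) = min Rtilde = r_N. *)
Definition inTup (r : nat -> nat) (N d n D : nat) (k : {ffun 'I_n -> nat}) : Prop :=
  (forall i : 'I_n, exists t : nat, k i = (N + d * t)%N) /\
  (forall i : 'I_n, (r (ext n N k i.+1 + D) <= r (k i))%N).

Definition gt_inf r N d n D (As : 'I_n -> seq int) (x : int) : Prop :=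
  exists k, inTup r N d n D k /\ dotA r n As k < x.
Definition le_sup r N d n D (As : 'I_n -> seq int) (x : int) : Prop :=
  forall y : int, y < x -> exists k, inTup r N d n D k /\ y < dotA r n As k.

Definition P_spec r N d n D (As : 'I_n -> seq int) (x : int) (k : {ffun 'I_n -> nat}) : Prop :=
  (gt_inf r N d n D As x ->
     inTup r N d n D k /\ dotA r n As k < x /\
     forall k', inTup r N d n D k' -> dotA r n As k' < x -> dotA r n As k' <= dotA r n As k) /\
  (~ gt_inf r N d n D As x ->
     inTup r N d n D k /\
     forall k', inTup r N d n D k' -> dotA r n As k <= dotA r n As k').

Definition Q_spec r N d n D (As : 'I_n -> seq int) (x : int) (k : {ffun 'I_n -> nat}) : Prop :=
  (le_sup r N d n D As x ->
     inTup r N d n D k /\ x <= dotA r n As k /\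
     forall k', inTup r N d n D k' -> x <= dotA r n As k' -> dotA r n As k <= dotA r n As k') /\
  (~ le_sup r N d n D As x ->
     inTup r N d n D k /\
     forall k', inTup r N d n D k' -> dotA r n As k' <= dotA r n As k).

(* The element selected (unique when z |-> A.z is injective on R^n_D). *)
Definition Pfun r N d n D (As : 'I_n -> seq int) (x : int) : {ffun 'I_n -> nat} :=
  epsilon (inhabits [ffun _ => N]) (P_spec r N d n D As x).
Definition Qfun r N d n D (As : 'I_n -> seq int) (x : int) : {ffun 'I_n -> nat} :=
  epsilon (inhabits [ffun _ => N]) (Q_spec r N d n D As x).

(* z |-> A.z is injective on R^n_D  (R^n_D = Rtilde^n_D with N = 0, d = 1) *)
Definition dot_injective r n D (As : 'I_n -> seq int) : Prop :=
  forall k1 k2, inTup r 0 1 n D k1 -> inTup r 0 1 n D k2 ->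
    dotA r n As k1 = dotA r n As k2 -> k1 = k2.

From mathcomp Require Import all_boot all_order all_algebra.
From mathcomp Require Import zify ring lra.
From Stdlib Require Import ClassicalEpsilon Classical Wf_nat.
Import Order.TTheory GRing.Theory Num.Theory.
Local Open Scope ring_scope.

(* Sparseness makes every nonzero operator [A] eventually strictly monotone, with
   increments [A (sigma z) - A z] exceeding [z] in absolute value, and makes [R] grow
   geometrically.  Hence, once [z_i >= sigma^Delta z_(i+1)] with [Delta] large, the
   sign of [A.z' - A.z] is decided by the first coordinate where [z] and [z'] differ:
   [z |-> A.z] is injective, and when the first coordinates of two tuples are more
   than one step of [Rtilde] apart, raising the smaller one by one step yields a value
   strictly between them.  As [P] and [Q] are consecutive values of [A.Rtilde^n_Delta],
   their first coordinates are at most one step apart. *)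

Section Tuples.
Variable n : nat.
Implicit Types (k : {ffun 'I_n -> nat}) (N D d : nat).

Lemma ext_lt N k j (hj : (j < n)%N) : ext n N k j = k (Ordinal hj).
Proof. by rewrite /ext insubT. Qed.

Lemma ext_ge N k j : (n <= j)%N -> ext n N k j = N.
Proof. by move=> hj; rewrite /ext insubF // ltnNge hj. Qed.

Lemma ext_ord N k (i : 'I_n) : ext n N k i = k i.
Proof. by rewrite (ext_lt N k _ (ltn_ord i)); congr (k _); apply: val_inj. Qed.

(* Membership of [(r (k i))_i] in [R^n_D], read on the indices. *)
Definition separated D k : Prop := forall i : 'I_n, (ext n 0 k i.+1 + D <= k i)%N.

Lemma separated_lt D k : separated D k ->
  forall i j : 'I_n, (i < j)%N -> (k j + D <= k i)%N.
Proof.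
move=> sep i j; rewrite -(ext_ord 0 k i) -(ext_ord 0 k j).
elim: (val j) (ltn_ord j) => // b IH b_lt; rewrite ltnS leq_eqVlt => /orP [/eqP <-|ib].
  by rewrite ext_ord; apply: sep.
have := sep (Ordinal (ltnW b_lt)); rewrite -(ext_lt 0 k _ (ltnW b_lt)) /=.
have := IH (ltnW b_lt) ib; lia.
Qed.

Lemma separated_ge D k : separated D k -> forall i, (D <= k i)%N.
Proof. by move=> sep i; have := sep i; lia. Qed.

Definition shift_first d k : {ffun 'I_n -> nat} :=
  [ffun j : 'I_n => if val j == 0%N then (k j + d)%N else k j].

End Tuples.

Arguments shift_first {n}.
Arguments separated_lt {n D k}.
Arguments separated_ge {n D k}.

Lemma int_argmin {T : Type} (S : T -> Prop) (f : T -> int) (lb : int) :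
  (forall t, S t -> lb <= f t) -> (exists t, S t) ->
  exists2 t, S t & forall t', S t' -> f t <= f t'.
Proof.
move=> lb_le [t0 St0]; pose Q m := exists2 t, S t & f t = lb + m%:Z.
have : exists m, Q m by exists `|f t0 - lb|%N, t0 => //; have := lb_le _ St0; lia.
case/(dec_inh_nat_subset_has_unique_least_element Q (fun m => classic (Q m))).
move=> m [[[t St ft] m_min] _].
exists t => // t' St'; have := lb_le _ St'.
have /m_min : Q `|f t' - lb|%N by exists t' => //; have := lb_le _ St'; lia.
lia.
Qed.

Lemma int_argmax {T : Type} (S : T -> Prop) (f : T -> int) (ub : int) :
  (forall t, S t -> f t <= ub) -> (exists t, S t) ->
  exists2 t, S t & forall t', S t' -> f t' <= f t.
Proof.
move=> le_ub S_ex.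
have neg_lb t : S t -> - ub <= - f t by move/le_ub; rewrite lerN2.
have [t St t_max] := int_argmin S (fun t => - f t) (- ub) neg_lb S_ex.
by exists t => // t' /t_max; rewrite lerN2.
Qed.

Lemma sigpow_mul_near (d N a b : nat) : (0 < d)%N ->
  ~ (N + d * a + d < N + d * b)%N -> ~ (N + d * b + d < N + d * a)%N ->
  exists2 e : int, e = -1 \/ e = 0 \/ e = 1 & (N + d * b)%N = sigpow (d%:Z * e) (N + d * a).
Proof.
case: d => // d _ not_up not_down; case: (ltngtP a b) => [ab|ba|->].
- by exists 1; [right; right | rewrite mulr1 /=; nia].
- by exists (-1); [left | rewrite mulrN1 /=; nia].
- by exists 0; [right; left | rewrite mulr0 /= addn0].
Qed.

Section Extremal.
Variables (r : nat -> nat) (N d n D : nat) (As : 'I_n -> seq int).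
Hypothesis tuples_exist : exists k, inTup r N d n D k.
Local Notation S := (inTup r N d n D).
Local Notation V := (dotA r n As).
Local Notation Pf := (Pfun r N d n D As).
Local Notation Qf := (Qfun r N d n D As).

Lemma not_le_sup_bound x : ~ le_sup r N d n D As x ->
  exists2 y, y < x & forall k, S k -> V k <= y.
Proof.
move=> not_sup; apply: NNPP => no_bound; apply: not_sup => y y_lt.
apply: NNPP => none_above; apply: no_bound; exists y => // k Sk.
by rewrite leNgt; apply/negP => hy; apply: none_above; exists k.
Qed.

Lemma Pfun_spec x : P_spec r N d n D As x (Pf x).
Proof.
apply: epsilon_spec; have [below|not_below] := classic (gt_inf r N d n D As x).
  have [k [Sk kx] k_max] :=
    int_argmax (fun k => S k /\ V k < x) V x (fun k hk => ltW hk.2) below.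
  by exists k; split=> // _; split=> //; split=> // k' Sk' k'x; apply: k_max.
have [k Sk k_min] : exists2 k, S k & forall k', S k' -> V k <= V k'.
  apply: (int_argmin S V x) tuples_exist => k Sk; rewrite leNgt.
  by apply/negP => kx; apply: not_below; exists k.
by exists k.
Qed.

Lemma Qfun_spec x : Q_spec r N d n D As x (Qf x).
Proof.
apply: epsilon_spec; have [sup|not_sup] := classic (le_sup r N d n D As x).
  have [|k [Sk xk] k_min] :=
    int_argmin (fun k => S k /\ x <= V k) V x (fun k hk => hk.2).
    by have [|k [Sk hk]] := sup (x - 1); [lia | exists k; split=> //; lia].
  by exists k; split=> // _; split=> //; split=> // k' Sk' xk'; apply: k_min.
have [y _ y_ub] := not_le_sup_bound x not_sup.
have [k Sk k_max] := int_argmax S V y y_ub tuples_exist.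
by exists k.
Qed.

Lemma Pfun_in x : S (Pf x).
Proof.
have [below|not_below] := classic (gt_inf r N d n D As x).
  exact: ((Pfun_spec x).1 below).1.
exact: ((Pfun_spec x).2 not_below).1.
Qed.

Lemma Qfun_in x : S (Qf x).
Proof.
have [sup|not_sup] := classic (le_sup r N d n D As x).
  exact: ((Qfun_spec x).1 sup).1.
exact: ((Qfun_spec x).2 not_sup).1.
Qed.

Lemma Pfun_lt_iff x : V (Pf x) < x <-> gt_inf r N d n D As x.
Proof.
split=> [Px|below]; first by exists (Pf x); split=> //; apply: Pfun_in.
by have [_ []] := (Pfun_spec x).1 below.
Qed.

Lemma Qfun_ge_iff x : x <= V (Qf x) <-> le_sup r N d n D As x.
Proof.
split=> [xQ y yx|sup]; first by exists (Qf x); split; [apply: Qfun_in | lia].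
by have [_ []] := (Qfun_spec x).1 sup.
Qed.

Lemma Pfun_Qfun_consecutive x :
  V (Pf x) <= V (Qf x) /\ forall k, S k -> ~ (V (Pf x) < V k < V (Qf x)).
Proof.
have SP := Pfun_in x; have SQ := Qfun_in x.
have [below|not_below] := classic (gt_inf r N d n D As x);
  have [sup|not_sup] := classic (le_sup r N d n D As x).
- have [_ [Px P_max]] := (Pfun_spec x).1 below.
  have [_ [xQ Q_min]] := (Qfun_spec x).1 sup.
  split=> [|k Sk]; first lia.
  by have [/(P_max _ Sk)|/(Q_min _ Sk)] := ltP (V k) x; lia.
- have [_ [Px P_max]] := (Pfun_spec x).1 below.
  have [_ Q_max] := (Qfun_spec x).2 not_sup.
  have [y yx y_ub] := not_le_sup_bound x not_sup.
  have Qx : V (Qf x) < x by have := y_ub _ SQ; lia.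
  have := Q_max _ SP; have := P_max _ SQ Qx; split=> [|k _]; lia.
- have [_ P_min] := (Pfun_spec x).2 not_below.
  have [_ [xQ Q_min]] := (Qfun_spec x).1 sup.
  have xP : x <= V (Pf x) by rewrite leNgt; apply/negP => Px; apply: not_below; exists (Pf x).
  have := P_min _ SQ; have := Q_min _ SP xP; split=> [|k _]; lia.
- have [y yx y_ub] := not_le_sup_bound x not_sup.
  by case: not_below; exists (Pf x); split=> //; have := y_ub _ SP; lia.
Qed.

End Extremal.

Arguments Pfun_in {r N d n D} As.
Arguments Qfun_in {r N d n D} As.
Arguments Pfun_lt_iff {r N d n D} As.
Arguments Qfun_ge_iff {r N d n D} As.
Arguments Pfun_Qfun_consecutive {r N d n D} As.

Section IncreasingEnumeration.
Variable r : nat -> nat.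
Hypothesis r_incr : forall k, (r k < r k.+1)%N.

Lemma r_leq : {mono r : a b / (a <= b)%N}.
Proof. exact/leq_mono/(homo_ltn ltn_trans). Qed.

Lemma leq_r k : (k <= r k)%N.
Proof. by elim: k => // k IH; apply: leq_ltn_trans IH (r_incr k). Qed.

Lemma opApp_opp A k : opApp r (map -%R A) k = - opApp r A k.
Proof.
rewrite /opApp size_map -sumrN; apply: eq_bigr => i _.
by rewrite (nth_map 0) // mulNr.
Qed.

Definition diff_op (A : seq int) : seq int :=
  mkseq (fun i => (0 :: A)`_i - A`_i) (size A).+1.

Lemma opApp_diff_op A k : opApp r (diff_op A) k = opApp r A k.+1 - opApp r A k.
Proof.
rewrite /opApp size_mkseq.
under eq_bigr => i _ do rewrite nth_mkseq // mulrBl.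
rewrite sumrB big_ord_recl /= mul0r add0r big_ord_recr /= nth_default // mul0r addr0.
by congr (_ - _); apply: eq_bigr => i _; rewrite /bump /= add1n addnS.
Qed.

Definition op_norm (A : seq int) : int := \sum_(i < size A) `|A`_i|.

Lemma op_norm_ge0 A : 0 <= op_norm A.
Proof. exact: sumr_ge0. Qed.

Lemma opApp_le_norm A m k k' : (size A <= m)%N -> (k <= k')%N ->
  `|opApp r A k| <= op_norm A * (r (k' + m))%:Z.
Proof.
move=> hm hk; rewrite /opApp /op_norm mulr_suml.
apply: le_trans (ler_norm_sum _ _ _) _; apply: ler_sum => i _.
rewrite normrM [`|_%:Z|]ger0_norm // ler_wpM2l // lez_nat r_leq.
by have := ltn_ord i; lia.
Qed.

Lemma inTup_separated N d n D k : inTup r N d n D k -> separated n D k.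
Proof.
move=> [_ sep] i; have := sep i; rewrite r_leq.
have [hi|hi] := ltnP i.+1 n; first by rewrite !(ext_lt _ _ _ _ hi).
by rewrite !ext_ge //; lia.
Qed.

Lemma inTup_nonempty N d n D : (0 < d)%N -> exists k, inTup r N d n D k.
Proof.
move=> d_gt0; exists [ffun i : 'I_n => (N + d * (D * (n - i)))%N].
split=> i; rewrite ffunE; first by eexists.
have dD : (D <= d * D)%N by rewrite leq_pmull.
rewrite r_leq; have [hi|hi] := ltnP i.+1 n.
  rewrite (ext_lt _ _ _ _ hi) ffunE /=.
  have -> : (n - i = (n - i.+1).+1)%N by lia.
  by rewrite mulnS mulnDr; lia.
rewrite ext_ge //; have -> : (n - i = 1)%N by have := ltn_ord i; lia.
by rewrite muln1; lia.
Qed.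

Lemma inTup_shift_first N d n D k :
  inTup r N d n D k -> inTup r N d n D (shift_first d k).
Proof.
move=> [mem sep]; split=> i.
  by rewrite ffunE; have [t ->] := mem i; case: eqP => _; [exists t.+1; lia | exists t].
have -> : ext n N (shift_first d k) i.+1 = ext n N k i.+1.
  by have [hi|hi] := ltnP i.+1 n; [rewrite !(ext_lt _ _ _ _ hi) ffunE | rewrite !ext_ge].
apply: leq_trans (sep i) _; rewrite r_leq ffunE.
by case: eqP => _; rewrite ?leq_addr.
Qed.

Section Growth.
Variables (A : seq int) (s : int) (L : nat).
Hypothesis growth :
  forall j, (r j)%:Z < s * (opApp r A (j + L).+1 - opApp r A (j + L)).

Lemma opApp_growth_mono a b : (L <= a <= b)%N -> s * opApp r A a <= s * opApp r A b.
Proof.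
case/andP=> La; elim: b => [|b IH]; first by rewrite leqn0 => /eqP ->.
rewrite leq_eqVlt => /orP [/eqP -> //|]; rewrite ltnS => ab.
apply: le_trans (IH ab) _; have := growth (b - L); rewrite subnK; last lia.
by rewrite mulrBr; lia.
Qed.

Lemma opApp_growth_gain a b : (L <= a < b)%N ->
  (r (b.-1 - L))%:Z < s * (opApp r A b - opApp r A a).
Proof.
move=> hab; have := growth (b.-1 - L); rewrite subnK; last lia.
rewrite prednK; last lia.
have := opApp_growth_mono a b.-1 ltac:(lia); rewrite !mulrBr; lia.
Qed.

End Growth.

Arguments opApp_growth_gain {A s L}.

Section Sparse.
Hypothesis r_sparse : sparse r.

Lemma sparse_const_op A c : (forall k, opApp r A k = c) -> c = 0.
Proof.
suff not_pos B c' : (forall k, opApp r B k = c') -> ~ 0 < c'.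
  move=> hc; case: (ltrgtP c 0) => // [c_lt0|c_gt0]; exfalso; last exact: not_pos hc c_gt0.
  apply: (not_pos (map -%R A) (- c)); last by rewrite oppr_gt0.
  by move=> k; rewrite opApp_opp hc.
move=> hc c'_gt0; have [|D HD] := (r_sparse B).2; first by exists 0%N => k _; rewrite hc.
by have := HD `|c'|%N; rewrite hc; have := leq_r `|c'|%N; lia.
Qed.

Lemma sparse_op_growth A : ~ op_zero r A ->
  exists s : int, exists L : nat, (s = 1 \/ s = -1) /\
    forall j, (r j)%:Z < s * (opApp r A (j + L).+1 - opApp r A (j + L)).
Proof.
move=> A_neq0; have [[Hz|[Hp|Hn]] S2] := r_sparse (diff_op A).
- have A_const k : opApp r A k = opApp r A 0.
    elim: k => // k <-; apply/eqP; rewrite -subr_eq0 -opApp_diff_op; exact/eqP.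
  by case: A_neq0 => k; rewrite A_const; apply: sparse_const_op A_const.
- have [L HL] := S2 Hp; exists 1, L; split; first by left.
  by move=> j; rewrite mul1r -opApp_diff_op.
- have [|L HL] := (r_sparse (map -%R (diff_op A))).2.
    by case: Hn => K HK; exists K => k /HK; rewrite opApp_opp oppr_gt0.
  exists (-1), L; split; first by right.
  by move=> j; rewrite mulN1r -opApp_diff_op -opApp_opp.
Qed.

Lemma sparse_mul_bound (C : int) : exists T, forall j, C * (r j)%:Z <= (r (j + T))%:Z.
Proof.
have succ_sub k : opApp r [:: -1; 1] k = (r k.+1)%:Z - (r k)%:Z.
  by rewrite /opApp /= !big_ord_recl big_ord0 /= addn0 addn1; ring.
have [|D HD] := (r_sparse [:: -1; 1]).2.
  by exists 0%N => k _; rewrite succ_sub subr_gt0 ltz_nat.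
have double k : (2 * r k <= r (k + D.+1))%N.
  have : (r k <= r (k + D))%N by rewrite r_leq leq_addr.
  by have := HD k; rewrite succ_sub addnS; lia.
have pow t j : (2 ^ t * r j <= r (j + t * D.+1))%N.
  elim: t j => [|t IH] j; first by rewrite mul1n addn0.
  rewrite expnS -mulnA [(t.+1 * _)%N]mulSnr addnA; apply: leq_trans (double _).
  by rewrite leq_mul2l IH orbT.
exists (`|C| * D.+1)%N => j; have := pow `|C|%N j; have := ltn_expl `|C|%N (ltnSn 1).
nia.
Qed.

End Sparse.

Section Dominance.
Variables (n : nat) (As : 'I_n -> seq int) (s : 'I_n -> int) (L : 'I_n -> nat) (T D : nat).
Local Notation M := (\sum_i op_norm (As i)).
Local Notation m := (\sum_i size (As i))%N.
Local Notation V := (dotA r n As).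
Hypothesis sign : forall i, s i = 1 \/ s i = -1.
Hypothesis growth : forall i j,
  (r j)%:Z < s i * (opApp r (As i) (j + L i).+1 - opApp r (As i) (j + L i)).
Hypothesis spread : forall j, 2 * M * (r j)%:Z <= (r (j + T))%:Z.
Hypothesis D_large : forall i, (L i + T + m + 1 <= D)%N.

Lemma dotA_tail_bound k k' (i : 'I_n) : separated n D k -> separated n D k' ->
  (forall j : 'I_n, (j < i)%N -> k j = k' j) -> (k i < k' i)%N ->
  `|\sum_(j | j != i) (opApp r (As j) (k' j) - opApp r (As j) (k j))|
    <= 2 * M * (r (k' i - D + m))%:Z.
Proof.
move=> sep sep' agree lt_i; set R := (r _)%:Z.
have size_le j : (size (As j) <= m)%N by rewrite (bigD1 j) //= leq_addr.
have term_ge0 j : 0 <= 2 * op_norm (As j) * R by rewrite !mulr_ge0 ?op_norm_ge0.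
have term j : j != i ->
    `|opApp r (As j) (k' j) - opApp r (As j) (k j)| <= 2 * op_norm (As j) * R.
  move=> ji; have [j_lt|j_gt|/val_inj ij] := ltngtP j i; last by rewrite ij eqxx in ji.
    by rewrite agree // subrr normr0.
  have := separated_lt sep _ _ j_gt; have := separated_lt sep' _ _ j_gt => k'j kj.
  have := opApp_le_norm (As j) _ (k' j) (k' i - D) (size_le j) ltac:(lia).
  have := opApp_le_norm (As j) _ (k j) (k' i - D) (size_le j) ltac:(lia).
  have := ler_normB (opApp r (As j) (k' j)) (opApp r (As j) (k j)); lra.
apply: le_trans (ler_norm_sum _ _ _) _; apply: le_trans (ler_sum _ term) _.
rewrite mulr_sumr mulr_suml [leRHS](bigD1 i) //=.
exact: ler_wpDl.
Qed.

Lemma dotA_lex_dominance k k' (i : 'I_n) : separated n D k -> separated n D k' ->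
  (forall j : 'I_n, (j < i)%N -> k j = k' j) -> (k i < k' i)%N ->
  0 < s i * (V k' - V k).
Proof.
move=> sep sep' agree lt_i.
have tail := dotA_tail_bound _ _ _ sep sep' agree lt_i.
have -> : V k' - V k = opApp r (As i) (k' i) - opApp r (As i) (k i)
    + \sum_(j | j != i) (opApp r (As j) (k' j) - opApp r (As j) (k j)).
  by rewrite /dotA -sumrB (bigD1 i).
have Dk := separated_ge sep i; have DL := D_large i.
have gain := opApp_growth_gain (growth i) (k i) (k' i) ltac:(lia).
have := spread (k' i - D + m).
have : (r (k' i - D + m + T) <= r ((k' i).-1 - L i))%N by rewrite r_leq; lia.
rewrite -lez_nat; set rest := \sum_(j | j != i) _ in tail *.
have := lerNnormlW (lexx `|rest|); have := ler_normlW (lexx `|rest|).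
by case: (sign i) gain => -> gain; lra.
Qed.

Lemma separated_dotA_inj k1 k2 :
  separated n D k1 -> separated n D k2 -> V k1 = V k2 -> k1 = k2.
Proof.
move=> sep1 sep2 eqV; apply/ffunP => i.
suff agree t : forall j : 'I_n, (j < t)%N -> k1 j = k2 j by apply: (agree i.+1).
elim: t => // t IH j; rewrite ltnS leq_eqVlt => /orP [/eqP jt|/IH //].
have below (l : 'I_n) : (l < j)%N -> k1 l = k2 l by move=> lj; apply: IH; rewrite -jt.
case: (ltngtP (k1 j) (k2 j)) => // lt12; exfalso.
  by have := dotA_lex_dominance _ _ _ sep1 sep2 below lt12; rewrite eqV subrr mulr0 ltxx.
have below' (l : 'I_n) : (l < j)%N -> k2 l = k1 l by move/below.
by have := dotA_lex_dominance _ _ _ sep2 sep1 below' lt12; rewrite eqV subrr mulr0 ltxx.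
Qed.

Lemma dotA_shift_first_between (hn : (0 < n)%N) N d a b : (0 < d)%N ->
  inTup r N d n D a -> inTup r N d n D b ->
  (a (Ordinal hn) + d < b (Ordinal hn))%N ->
  exists2 w, inTup r N d n D w & V a < V w < V b \/ V b < V w < V a.
Proof.
move=> d_gt0 Sa Sb ab; set w := shift_first d a.
have Sw : inTup r N d n D w by apply: inTup_shift_first.
have w0 : w (Ordinal hn) = (a (Ordinal hn) + d)%N by rewrite ffunE eqxx.
have no_below (k k' : {ffun 'I_n -> nat}) (j : 'I_n) : (j < Ordinal hn)%N -> k j = k' j by [].
have sep k : inTup r N d n D k -> separated n D k by apply: inTup_separated.
have aw := dotA_lex_dominance _ _ _ (sep _ Sa) (sep _ Sw) (no_below a w) ltac:(lia).
have wb := dotA_lex_dominance _ _ _ (sep _ Sw) (sep _ Sb) (no_below w b) ltac:(lia).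
by exists w => //; case: (sign (Ordinal hn)) aw wb => -> aw wb; lia.
Qed.

Lemma Qfun_first_near_Pfun (hn : (0 < n)%N) N d x : (0 < d)%N ->
  exists2 e : int, e = -1 \/ e = 0 \/ e = 1 &
    Qfun r N d n D As x (Ordinal hn) = sigpow (d%:Z * e) (Pfun r N d n D As x (Ordinal hn)).
Proof.
move=> d_gt0; have tuples := inTup_nonempty N d n D d_gt0.
have [PQ gap] := Pfun_Qfun_consecutive As tuples x.
have SP := Pfun_in As tuples x; have SQ := Qfun_in As tuples x.
have [tP eP] := SP.1 (Ordinal hn); have [tQ eQ] := SQ.1 (Ordinal hn).
rewrite eP eQ; apply: (sigpow_mul_near _ _ _ _ d_gt0); rewrite -eP -eQ.
  by move=> /(dotA_shift_first_between hn _ _ _ _ d_gt0 SP SQ) [w /gap]; lia.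
by move=> /(dotA_shift_first_between hn _ _ _ _ d_gt0 SQ SP) [w /gap]; lia.
Qed.

End Dominance.
End IncreasingEnumeration.

Arguments sparse_op_growth {r} r_incr r_sparse {A}.
Arguments sparse_mul_bound {r}.
Arguments inTup_nonempty {r}.
Arguments inTup_separated {r} r_incr {N d n D k}.
Arguments separated_dotA_inj {r} r_incr {n As s L T D}.
Arguments Qfun_first_near_Pfun {r} r_incr {n As s L T D}.


Theorem mainTheorem7 (r : nat -> nat) (r_incr : forall k, (r k < r k.+1)%N)
  (hsparse : sparse r) (d : nat) (hd : (0 < d)%N) (N : nat)
  (n : nat) (hn : (0 < n)%N) (As : 'I_n -> seq int)
  (hAs : forall i, ~ op_zero r (As i)) :
  exists D0 : nat, forall D : nat, (D0 <= D)%N -> (d %| D)%N ->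
    dot_injective r n D As /\
    (forall x : int,
       (dotA r n As (Pfun r N d n D As x) < x <-> gt_inf r N d n D As x) /\
       (x <= dotA r n As (Qfun r N d n D As x) <-> le_sup r N d n D As x)) /\
    (forall x : int, exists e : int, (e = -1 \/ e = 0 \/ e = 1) /\
       r (Qfun r N d n D As x (Ordinal hn)) =
       r (sigpow (d%:Z * e) (Pfun r N d n D As x (Ordinal hn)))).
Proof.
have /fin_all_exists [s /fin_all_exists [L sL]] := fun i => sparse_op_growth r_incr hsparse (hAs i).
have sign i := (sL i).1; have growth i := (sL i).2.
have [T spread] := sparse_mul_bound r_incr hsparse (2 * \sum_i op_norm (As i)).
exists (\sum_i L i + T + \sum_i size (As i) + 1)%N => D D_ge _.
have D_large i : (L i + T + \sum_i size (As i) + 1 <= D)%N.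
  have : (L i <= \sum_i L i)%N by rewrite (bigD1 i) //= leq_addr.
  lia.
have tuples := inTup_nonempty r_incr N d n D hd.
split; [|split].
- move=> k1 k2 /(inTup_separated r_incr) sep1 /(inTup_separated r_incr) sep2.
  exact: (separated_dotA_inj r_incr sign growth spread D_large _ _ sep1 sep2).
- by move=> x; split; [apply: Pfun_lt_iff As tuples x | apply: Qfun_ge_iff As tuples x].
- move=> x; have [e he ->] := Qfun_first_near_Pfun r_incr sign growth spread D_large hn N d x hd.
  by exists e.
Qed.
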